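(* Let $S=(s_1,s_2,\dots,s_k)$ be finitely many positive real numbers such that $\max S\le \sum S/(1+\pi/2)$. Then there exists a cyclic polygon (a polygon inscribed in a circle) with these edge lengths that contains the center of its circle. *)

From Stdlib Require Import Reals Lra Lia.
Open Scope R_scope.

Fixpoint rsum (n : nat) (f : nat -> R) : R :=
  match n with
  | O => 0
  | S m => rsum m f + f m
  end.

Definition dist2 (x1 y1 x2 y2 : R) : R :=
  sqrt ((x1 - x2) ^ 2 + (y1 - y2) ^ 2).

(* A cyclic polygon with k vertices inscribed in the circle of center (cx,cy)
   and radius r > 0: vertex i is (cx + r cos (theta i), cy + r sin (theta i)),
   the angles theta 0 < theta 1 < ... < theta (k-1) < theta 0 + 2 PI
   (vertices distinct and listed in cyclic order around the circle, so the
   polygon is simple/convex).  The polygon contains the center: the center lies in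
   the (closed) convex hull of the vertices. *)
Definition cyclic_polygon_containing_center (k : nat) (s : nat -> R) : Prop :=
  exists (cx cy r : R) (theta : nat -> R),
    0 < r /\
    (forall i : nat, (i + 1 < k)%nat -> theta i < theta (i + 1)%nat) /\
    theta (k - 1)%nat < theta O + 2 * PI /\
    (let vx := fun i => cx + r * cos (theta i) in
     let vy := fun i => cy + r * sin (theta i) in
     (forall i : nat, (i < k)%nat ->
        dist2 (vx i) (vy i) (vx ((i + 1) mod k)%nat) (vy ((i + 1) mod k)%nat) = s i) /\
     exists w : nat -> R,
       (forall i : nat, (i < k)%nat -> 0 <= w i) /\
       rsum k w = 1 /\
       rsum k (fun i => w i * vx i) = cx /\
       rsum k (fun i => w i * vy i) = cy).

From Stdlib Require Import Reals Ranalysis5 Lra Lia.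
Open Scope R_scope.

(* Put the edge of length s_i on the circle of radius 1/(2t) as the chord with
   central angle 2 asin (s_i t).  The chords close up exactly when
   sum_i asin (s_i t) = PI.  This sum vanishes at t = 0, and at t = 1/max S it is
   at least PI because asin y >= y and asin 1 = PI/2; this is where the
   hypothesis max S <= sum S / (1 + PI/2) enters.  The intermediate value theorem
   provides t.  All central angles are then at most PI, so the arc of some edge
   contains the antipode of vertex 0, and the centre lies in the triangle formed
   by vertex 0 and the two endpoints of that edge. *)

Lemma rsum_ext n f g :
  (forall i, (i < n)%nat -> f i = g i) -> rsum n f = rsum n g.
Proof.
  induction n as [|n IH]; intros Hfg; simpl; [reflexivity|].
  rewrite IH, Hfg; [reflexivity | lia | intros i Hi; apply Hfg; lia].
Qed.

Lemma rsum_plus n f g : rsum n (fun i => f i + g i) = rsum n f + rsum n g.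
Proof. induction n as [|n IH]; simpl; [ring|]. rewrite IH; ring. Qed.

Lemma rsum_minus n f g : rsum n (fun i => f i - g i) = rsum n f - rsum n g.
Proof. induction n as [|n IH]; simpl; [ring|]. rewrite IH; ring. Qed.

Lemma rsum_scal n c f : rsum n (fun i => c * f i) = c * rsum n f.
Proof. induction n as [|n IH]; simpl; [ring|]. rewrite IH; ring. Qed.

Lemma rsum_partial_le n m f :
  (forall i, (i < n)%nat -> 0 <= f i) -> (m <= n)%nat -> rsum m f <= rsum n f.
Proof.
  induction n as [|n IH]; intros Hf Hmn.
  - replace m with 0%nat by lia; lra.
  - destruct (Nat.eq_dec m (S n)) as [->|Hm]; [lra|].
    simpl. specialize (IH (fun i Hi => Hf i ltac:(lia)) ltac:(lia)).
    specialize (Hf n ltac:(lia)). lra.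
Qed.

Lemma rsum_ge_term n m f :
  (forall i, (i < n)%nat -> 0 <= f i) -> (m < n)%nat -> f m <= rsum n f.
Proof.
  intros Hf Hm.
  apply Rle_trans with (rsum (S m) f); [|apply rsum_partial_le; auto].
  pose proof (rsum_partial_le m 0 f (fun i Hi => Hf i ltac:(lia)) ltac:(lia)).
  simpl in *. lra.
Qed.

Definition delta (m i : nat) : R := if Nat.eqb i m then 1 else 0.

Lemma rsum_delta n m g :
  rsum n (fun i => delta m i * g i) = if Nat.ltb m n then g m else 0.
Proof.
  induction n as [|n IH]; simpl; [reflexivity|].
  rewrite IH. unfold delta.
  destruct (Nat.eqb_spec n m), (Nat.ltb_spec m n), (Nat.ltb_spec m (S n));
    try lia; subst; ring.
Qed.

Lemma rsum_three_deltas n m1 m2 m3 c1 c2 c3 g :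
  (m1 < n)%nat -> (m2 < n)%nat -> (m3 < n)%nat ->
  rsum n (fun i => (c1 * delta m1 i + c2 * delta m2 i + c3 * delta m3 i) * g i)
  = c1 * g m1 + c2 * g m2 + c3 * g m3.
Proof.
  intros H1 H2 H3.
  rewrite (rsum_ext n _ (fun i => c1 * (delta m1 i * g i)
                             + c2 * (delta m2 i * g i) + c3 * (delta m3 i * g i)))
    by (intros; ring).
  rewrite !rsum_plus, !rsum_scal, !rsum_delta.
  apply Nat.ltb_lt in H1, H2, H3. rewrite H1, H2, H3. reflexivity.
Qed.

Lemma exists_argmax n (f : nat -> R) :
  (0 < n)%nat -> exists m, (m < n)%nat /\ forall i, (i < n)%nat -> f i <= f m.
Proof.
  induction n as [|n IH]; intros Hn; [lia|].
  destruct (Nat.eq_dec n 0) as [->|Hn0].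
  - exists 0%nat. split; [lia|]. intros i Hi. replace i with 0%nat by lia. lra.
  - destruct (IH ltac:(lia)) as [m [Hm Hmax]].
    destruct (Rle_dec (f n) (f m)).
    + exists m. split; [lia|]. intros i Hi.
      destruct (Nat.eq_dec i n) as [->|]; [assumption|apply Hmax; lia].
    + exists n. split; [lia|]. intros i Hi.
      destruct (Nat.eq_dec i n) as [->|]; [lra|].
      specialize (Hmax i ltac:(lia)). lra.
Qed.

Lemma crossing_index (f : nat -> R) c n :
  f 0%nat < c -> c <= f n -> exists j, (j < n)%nat /\ f j < c <= f (S j).
Proof.
  induction n as [|n IH]; intros H0 Hn; [lra|].
  destruct (Rle_lt_dec c (f n)) as [Hc|Hc].
  - destruct (IH H0 Hc) as [j [Hj Hfj]]. exists j. split; [lia|assumption].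
  - exists n. split; [lia|lra].
Qed.

Lemma IVT_interv_le f x y c :
  x <= y -> (forall a, x <= a <= y -> continuity_pt f a) ->
  f x <= c <= f y -> exists z, x <= z <= y /\ f z = c.
Proof.
  intros Hxy Hf [Hx Hy].
  destruct (Req_dec (f x) c) as [Ex|Ex]; [exists x; split; [lra|assumption]|].
  destruct (Req_dec (f y) c) as [Ey|Ey]; [exists y; split; [lra|assumption]|].
  assert (Hlt : x < y) by (destruct (Req_dec x y); [subst; lra|lra]).
  destruct (IVT_interv (fun a => f a - c) x y) as [z [Hz Hfz]]; try lra.
  - intros a Ha. apply continuity_pt_minus; [now apply Hf|].
    apply continuity_pt_const. intros u v. reflexivity.
  - exists z. split; [assumption|lra].
Qed.

Lemma continuity_pt_rsum n (g : nat -> R -> R) x :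
  (forall i, (i < n)%nat -> continuity_pt (g i) x) ->
  continuity_pt (fun t => rsum n (fun i => g i t)) x.
Proof.
  induction n as [|n IH]; intros Hg; simpl.
  - apply continuity_pt_const. intros u v. reflexivity.
  - apply (continuity_pt_plus (fun t => rsum n (fun i => g i t)) (g n)).
    + apply IH. intros i Hi. apply Hg. lia.
    + apply Hg. lia.
Qed.

Lemma asin_ge_id y : 0 <= y <= 1 -> y <= asin y.
Proof.
  intros Hy. destruct (Req_dec y 0) as [->|Hy0]; [rewrite asin_0; lra|].
  pose proof (asin_bound y). pose proof (sin_asin y ltac:(lra)).
  destruct (Rle_lt_dec (asin y) 0) as [Hneg|Hpos].
  - pose proof (sin_ge_0 (- asin y) ltac:(lra) ltac:(pose proof PI_RGT_0; lra)) as Hs.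
    rewrite sin_neg in Hs. lra.
  - pose proof (sin_lt_x (asin y) Hpos). lra.
Qed.

Lemma asin_continuity_pt y : -1 < y <= 1 -> continuity_pt asin y.
Proof.
  intros Hy. destruct (Rlt_le_dec y 1) as [Hy1|Hy1].
  { apply derivable_continuous_pt, derivable_pt_asin. lra. }
  replace y with 1 by lra. clear y Hy Hy1.
  intros eps Heps. pose proof PI_RGT_0.
  set (e := Rmin eps (PI / 2)).
  assert (He : 0 < e <= PI / 2) by (unfold e, Rmin; destruct Rle_dec; lra).
  assert (Hee : e <= eps) by apply Rmin_l.
  set (y0 := sin (PI / 2 - e)).
  (* y0 < x <= 1 forces PI/2 - e < asin x <= PI/2, since sin is increasing there *)
  assert (Hy0 : 0 <= y0 < 1).
  { split; [apply sin_ge_0; lra|]. rewrite <- sin_PI2.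
    apply sin_increasing_1; lra. }
  exists (1 - y0). split; [lra|].
  intros x [_ Hx]. simpl in *. unfold R_dist in *. rewrite asin_1.
  apply Rabs_def2 in Hx.
  destruct (Rle_lt_dec 1 x) as [Hx1|Hx1].
  { unfold asin. destruct (Rle_dec x (-1)); [lra|].
    destruct (Rle_dec 1 x); [|lra]. rewrite Rminus_diag, Rabs_R0. lra. }
  pose proof (asin_bound x). pose proof (sin_asin x ltac:(lra)).
  destruct (Rle_lt_dec (asin x) (PI / 2 - e)) as [Hle|Hgt].
  - pose proof (sin_incr_1 (asin x) (PI / 2 - e)) as Hs.
    fold y0 in Hs. lra.
  - rewrite Rabs_left1; lra.
Qed.

Lemma dist2_on_circle cx cy r a b : 0 <= r ->
  dist2 (cx + r * cos a) (cy + r * sin a) (cx + r * cos b) (cy + r * sin b)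
  = 2 * r * Rabs (sin ((b - a) / 2)).
Proof.
  intros Hr. unfold dist2. set (h := (b - a) / 2).
  assert (Hcos : cos (b - a) = 1 - 2 * sin h ^ 2).
  { replace (b - a) with (2 * h) by (unfold h; field). rewrite cos_2a_sin. ring. }
  rewrite cos_minus in Hcos.
  pose proof (sin2_cos2 a). pose proof (sin2_cos2 b). unfold Rsqr in *.
  replace ((cx + r * cos a - (cx + r * cos b)) ^ 2 + (cy + r * sin a - (cy + r * sin b)) ^ 2)
    with ((2 * r * Rabs (sin h)) ^ 2).
  - apply sqrt_pow2. pose proof (Rabs_pos (sin h)). nra.
  - rewrite Rpow_mult_distr, pow2_abs. nra.
Qed.

Lemma origin_in_triangle a b :
  0 <= a < PI -> PI <= b <= a + PI ->
  exists c1 c2 c3, 0 <= c1 /\ 0 <= c2 /\ 0 <= c3 /\ c1 + c2 + c3 = 1 /\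
    c1 + c2 * cos a + c3 * cos b = 0 /\ c2 * sin a + c3 * sin b = 0.
Proof.
  intros Ha Hb.
  (* up to normalisation, u, v, w are the barycentric coordinates of the origin
     in the triangle of the unit vectors at angles 0, a, b *)
  pose (u := sin (b - a)). pose (v := - sin b). pose (w := sin a).
  assert (Hu : 0 <= u) by (apply sin_ge_0; lra).
  assert (Hv : 0 <= v).
  { unfold v. replace b with ((b - PI) + PI) by ring. rewrite neg_sin.
    pose proof (sin_ge_0 (b - PI) ltac:(lra) ltac:(lra)). lra. }
  assert (Hw : 0 <= w) by (apply sin_ge_0; lra).
  assert (Ex : u + v * cos a + w * cos b = 0) by (unfold u, v, w; rewrite sin_minus; ring).
  assert (Ey : v * sin a + w * sin b = 0) by (unfold v, w; ring).
  destruct (Rlt_le_dec 0 (u + v + w)) as [HS|HS].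
  - exists (u / (u + v + w)), (v / (u + v + w)), (w / (u + v + w)).
    pose proof (Rinv_0_lt_compat _ HS).
    repeat split; try (unfold Rdiv; apply Rmult_le_pos; lra).
    + field. lra.
    + transitivity ((u + v * cos a + w * cos b) / (u + v + w)); [field; lra|].
      rewrite Ex. field. lra.
    + transitivity ((v * sin a + w * sin b) / (u + v + w)); [field; lra|].
      rewrite Ey. field. lra.
  - assert (Ea : a = 0).
    { destruct (Rle_lt_dec a 0); [lra|].
      pose proof (sin_gt_0 a ltac:(lra) ltac:(lra)). unfold w in *. lra. }
    assert (Eb : b = PI) by lra.
    exists 0, (1 / 2), (1 / 2). rewrite Ea, Eb, cos_0, cos_PI, sin_0, sin_PI.
    repeat split; lra.
Qed.

Section Central_angles.

Variables (k : nat) (alpha : nat -> R).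
Hypothesis k_pos : (0 < k)%nat.
Hypothesis alpha_range : forall i, (i < k)%nat -> 0 <= alpha i <= PI.
Hypothesis alpha_sum : rsum k alpha = 2 * PI.

Lemma partial_angle_range i : (i <= k)%nat -> 0 <= rsum i alpha <= 2 * PI.
Proof.
  intros Hi. rewrite <- alpha_sum.
  assert (Hnn : forall j, (j < k)%nat -> 0 <= alpha j) by (intros j Hj; apply alpha_range, Hj).
  split.
  - apply (rsum_partial_le i 0 alpha (fun j Hj => Hnn j ltac:(lia))). lia.
  - apply rsum_partial_le; assumption.
Qed.

Lemma vertex_wrap i : (i < k)%nat ->
  cos (rsum ((i + 1) mod k) alpha) = cos (rsum (S i) alpha) /\
  sin (rsum ((i + 1) mod k) alpha) = sin (rsum (S i) alpha).
Proof.
  intros Hi. destruct (Nat.eq_dec (S i) k) as [Ek|Ek].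
  - replace (i + 1)%nat with k by lia. rewrite Nat.Div0.mod_same, Ek, alpha_sum.
    simpl. rewrite cos_2PI, sin_2PI, cos_0, sin_0. split; reflexivity.
  - rewrite Nat.mod_small by lia. replace (i + 1)%nat with (S i) by lia.
    split; reflexivity.
Qed.

Lemma arc_across_antipode :
  exists j, (j < k)%nat /\ rsum j alpha < PI <= rsum (S j) alpha.
Proof.
  pose proof PI_RGT_0.
  apply (crossing_index (fun i => rsum i alpha)); simpl; lra.
Qed.

Lemma center_in_hull cx cy r :
  exists w : nat -> R,
    (forall i, (i < k)%nat -> 0 <= w i) /\
    rsum k w = 1 /\
    rsum k (fun i => w i * (cx + r * cos (rsum i alpha))) = cx /\
    rsum k (fun i => w i * (cy + r * sin (rsum i alpha))) = cy.
Proof.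
  destruct arc_across_antipode as [j [Hj [Ha Hb]]].
  set (j' := ((j + 1) mod k)%nat).
  assert (Hj' : (j' < k)%nat) by (apply Nat.mod_upper_bound; lia).
  destruct (vertex_wrap j Hj) as [Hcos Hsin]. fold j' in Hcos, Hsin.
  destruct (origin_in_triangle (rsum j alpha) (rsum (S j) alpha))
    as [c1 [c2 [c3 [H1 [H2 [H3 [Hc [Ex Ey]]]]]]]].
  { pose proof (partial_angle_range j ltac:(lia)). lra. }
  { simpl in Hb |- *. pose proof (alpha_range j Hj). lra. }
  exists (fun i => c1 * delta 0 i + c2 * delta j i + c3 * delta j' i).
  repeat split.
  - intros i _. unfold delta.
    destruct (Nat.eqb i 0), (Nat.eqb i j), (Nat.eqb i j'); lra.
  - rewrite (rsum_ext k _ (fun i => (c1 * delta 0 i + c2 * delta j i + c3 * delta j' i) * 1))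
      by (intros; ring).
    rewrite rsum_three_deltas by (assumption || lia). lra.
  - rewrite rsum_three_deltas by (assumption || lia). simpl rsum at 1.
    rewrite Hcos, cos_0.
    transitivity (cx * (c1 + c2 + c3) + r * (c1 + c2 * cos (rsum j alpha)
                                                + c3 * cos (rsum (S j) alpha))); [ring|].
    rewrite Hc, Ex. ring.
  - rewrite rsum_three_deltas by (assumption || lia). simpl rsum at 1.
    rewrite Hsin, sin_0.
    transitivity (cy * (c1 + c2 + c3) + r * (c2 * sin (rsum j alpha)
                                                + c3 * sin (rsum (S j) alpha))); [ring|].
    rewrite Hc, Ey. ring.
Qed.

Lemma inscribed_polygon_of_central_angles (s : nat -> R) r :
  (forall i, (i < k)%nat -> 0 < alpha i) -> 0 < r ->
  (forall i, (i < k)%nat -> s i = 2 * r * sin (alpha i / 2)) ->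
  cyclic_polygon_containing_center k s.
Proof.
  intros Hpos Hr Hs.
  exists 0, 0, r, (fun i => rsum i alpha).
  split; [exact Hr|]. split; [|split].
  - intros i Hi. replace (i + 1)%nat with (S i) by lia. simpl.
    pose proof (Hpos i ltac:(lia)). lra.
  - assert (Hlast : rsum k alpha = rsum (k - 1) alpha + alpha (k - 1)%nat)
      by (replace k with (S (k - 1)) at 1 by lia; reflexivity).
    pose proof (Hpos (k - 1)%nat ltac:(lia)). simpl. lra.
  - cbv beta zeta. split; [|apply center_in_hull].
    intros i Hi. destruct (vertex_wrap i Hi) as [Hcos Hsin].
    rewrite Hcos, Hsin, dist2_on_circle by lra.
    replace (rsum (S i) alpha - rsum i alpha) with (alpha i) by (simpl; ring).
    pose proof (alpha_range i Hi).
    rewrite Rabs_pos_eq by (apply sin_ge_0; lra).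
    symmetry. apply Hs, Hi.
Qed.

End Central_angles.

Section Closing_scale.

Variables (k m : nat) (s : nat -> R).
Hypothesis m_lt_k : (m < k)%nat.
Hypothesis s_range : forall i, (i < k)%nat -> 0 < s i <= s m.
Hypothesis s_sum : (1 + PI / 2) * s m <= rsum k s.

Lemma scaled_side_range i t :
  (i < k)%nat -> 0 <= t <= / s m -> 0 <= s i * t <= 1.
Proof.
  intros Hi Ht. pose proof (s_range i Hi). pose proof (s_range m m_lt_k).
  split; [apply Rmult_le_pos; lra|].
  rewrite <- (Rinv_r (s m)) by lra. apply Rmult_le_compat; lra.
Qed.

Lemma half_angle_sum_ge_PI : PI <= rsum k (fun i => asin (s i / s m)).
Proof.
  pose proof (s_range m m_lt_k) as Hm.
  assert (Hgap : asin (s m / s m) - s m / s m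
                 <= rsum k (fun i => asin (s i / s m) - s i / s m)).
  { apply (rsum_ge_term k m (fun i => asin (s i / s m) - s i / s m)); [|assumption].
    intros i Hi. pose proof (asin_ge_id (s i / s m)).
    pose proof (scaled_side_range i (/ s m) Hi). unfold Rdiv in *.
    pose proof (Rinv_0_lt_compat (s m)). lra. }
  rewrite rsum_minus, Rdiv_diag, asin_1 in Hgap by lra.
  unfold Rdiv in Hgap. rewrite (rsum_ext k (fun i => s i * / s m) (fun i => / s m * s i)), rsum_scal in Hgap
    by (intros; ring).
  assert (Hratio : 1 + PI / 2 <= / s m * rsum k s).
  { apply (Rmult_le_reg_l (s m)); [lra|].
    rewrite <- Rmult_assoc, Rinv_r by lra. lra. }
  unfold Rdiv. lra.
Qed.

Lemma exists_closing_scale :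
  exists t, 0 < t /\ (forall i, (i < k)%nat -> s i * t <= 1) /\
            rsum k (fun i => asin (s i * t)) = PI.
Proof.
  pose proof (s_range m m_lt_k) as Hm. pose proof PI_RGT_0.
  pose proof (Rinv_0_lt_compat (s m) ltac:(lra)).
  set (F := fun t => rsum k (fun i => asin (s i * t))).
  assert (F0 : F 0 = 0).
  { unfold F. rewrite (rsum_ext k _ (fun _ => 0 * 0)), rsum_scal by
      (intros; rewrite Rmult_0_r, asin_0; ring). ring. }
  destruct (IVT_interv_le F 0 (/ s m) PI) as [t [Ht Hsum]].
  - lra.
  - intros a Ha. apply (continuity_pt_rsum k (fun i t => asin (s i * t))).
    intros i Hi. reg. apply asin_continuity_pt.
    pose proof (scaled_side_range i a Hi Ha). lra.
  - split; [lra|apply half_angle_sum_ge_PI].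
  - exists t. split; [|split].
    + destruct (Req_dec t 0) as [->|]; lra.
    + intros i Hi. apply (scaled_side_range i t Hi Ht).
    + exact Hsum.
Qed.

End Closing_scale.

Theorem lemma11 (k : nat) (s : nat -> R) :
  (0 < k)%nat ->
  (forall i : nat, (i < k)%nat -> 0 < s i) ->
  (forall i : nat, (i < k)%nat -> s i <= rsum k s / (1 + PI / 2)) ->
  cyclic_polygon_containing_center k s.
Proof.
  intros Hk Hpos Hmax. pose proof PI_RGT_0.
  destruct (exists_argmax k s Hk) as [m [Hm Hsm]].
  assert (Hsum : (1 + PI / 2) * s m <= rsum k s).
  { pose proof (Rmult_le_compat_l (1 + PI / 2) _ _ ltac:(lra) (Hmax m Hm)) as Hmul.
    replace ((1 + PI / 2) * (rsum k s / (1 + PI / 2))) with (rsum k s) in Hmul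
      by (field; lra). lra. }
  destruct (exists_closing_scale k m s Hm (fun i Hi => conj (Hpos i Hi) (Hsm i Hi)) Hsum)
    as [t [Ht [Hle Hclose]]].
  assert (Hy : forall i, (i < k)%nat -> 0 < s i * t <= 1).
  { intros i Hi. split; [apply Rmult_lt_0_compat; auto|auto]. }
  assert (Hangle : forall i, (i < k)%nat -> 0 < asin (s i * t) <= PI / 2).
  { intros i Hi. pose proof (Hy i Hi). pose proof (asin_bound (s i * t)).
    pose proof (asin_ge_id (s i * t)). lra. }
  apply (inscribed_polygon_of_central_angles k (fun i => 2 * asin (s i * t)) Hk)
    with (r := / (2 * t)).
  - intros i Hi. pose proof (Hangle i Hi). lra.
  - rewrite rsum_scal, Hclose. reflexivity.
  - intros i Hi. pose proof (Hangle i Hi). lra.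
  - apply Rinv_0_lt_compat. lra.
  - intros i Hi. replace (2 * asin (s i * t) / 2) with (asin (s i * t)) by field.
    rewrite sin_asin by (pose proof (Hy i Hi); lra). field. lra.
Qed.
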